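(* Let $X(t)$ be a Markov process on microstates, partitioned into finitely many macrostates, with macroscopic time step $\tau>0$ and decorrelation times $\tau_I$, and let each macrostate $I$ have a quasistationary distribution $\eta_I$. Let $(X(t),R(t),C(t))$ be the augmented Markov chain with time step $\tau$ on augmented states $(x,I,s)$, and let $T$ be its Markov kernel, $$T(x,I,s;dy,J,t) = \mathbb P^{x,I,s}\big[(X(\tau),R(\tau),C(\tau)) \in (dy,J,t)\big].$$ Define the projector $P$ on functions $f=f(x,I,s)$ of augmented states by $Pf(x,I,s) = \int \eta_I(dz)\, f(z,I,\tau_I)$, let $Q = \mathrm{Id}-P$, and for integers $n\ge 1$ let $K(n) = PT(QT)^{n-1}$. Let $\chi_J(x,I,s) = \delta_{I=J}$ and define matrices $$\mathcal K_{IJ}(n\tau) := K(n)\chi_J(x,I,s), \qquad \mathcal T_{IJ}(n\tau) := \int \eta_I(dx)\,\mathbb P^{x,I,\tau_I}\big[R(n\tau)=J\big]$$ (the former does not depend on $x$ or $s$). Then for every integer $n\ge 1$, $$\mathcal T(n\tau) = \sum_{m=1}^{n} \mathcal K(m\tau)\,\mathcal T((n-m)\tau).$$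
   Context: The macroscopic jump process $R(t)$ (defined at multiples of $\tau$) jumps from its current macrostate $I$ to $J\ne I$ at time $t$ iff $X(t-c)\in J$ for all $0\le c\le \tau_J$; otherwise it stays put. $C(t)$ is the consecutive time $X(t)$ has spent in its current macrostate, with the count stopped at $\tau_J$ if $X(t)\in J$. $\mathbb P^{x,I,s}$ denotes probability for the augmented chain started at $(X(0),R(0),C(0))=(x,I,s)$. A kernel $S(x,I,s;dy,J,t)$ acts on functions by $Sf(x,I,s) = \int\sum_{J,t} S(x,I,s;dy,J,t) f(y,J,t)$. The quasistationary distribution $\eta_I$ is a probability measure on $I$ with $\eta_I(\cdot)=\int\eta_I(dx)\mathbb P(X(t)\in\cdot\mid X(0)=x,\ X(s)\in I,\ s\le t)$ for all $t$. *)

From HB Require Import structures.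
From mathcomp Require Import all_boot all_order all_algebra.
From mathcomp Require Import all_classical all_reals all_analysis.
Set Implicit Arguments. Unset Strict Implicit. Unset Printing Implicit Defensive.
Import Order.TTheory GRing.Theory Num.Theory.
Local Open Scope classical_set_scope.
Local Open Scope ring_scope.

Definition mstate (k : nat) := 'I_k.+1.
HB.instance Definition _ k := Finite.on (mstate k).
HB.instance Definition _ k := isPointed.Build (mstate k) ord0.
HB.instance Definition _ k := @isMeasurable.Build default_measure_display
  (mstate k) discrete_measurable discrete_measurable0
  discrete_measurableC discrete_measurableU.

(* Augmented states (x, I, s) : microstate, macrostate, counter. *)
Definition aug (dE : measure_display) (E : measurableType dE) (k : nat)
  (R : realType) := (E * mstate k * R)%type.

Section defs.
Context {R : realType} {dE dO : measure_display} {E : measurableType dE}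
  {k : nat} {Om : measurableType dO}.
Local Notation S := (aug E k R).

(* (Pr a, Z) is the augmented Markov chain (X,R,C)(n tau), n = 0,1,2,...,
   started at a = (x,I,s), with transition kernel T: Z 0 = a a.s. and the
   finite-dimensional distributions obey the Markov property with kernel T. *)
Definition augmented_markov_chain (T : R.-pker S ~> S)
  (Pr : S -> probability Om R) (Z : nat -> Om -> S) : Prop :=
  [/\ forall n, measurable_fun setT (Z n),
      forall (a : S) (A : set S), measurable A ->
        Pr a (Z 0%N @^-1` A) = \d_a A &
      forall (a : S) (n : nat) (A : nat -> set S),
        (forall i, measurable (A i)) ->
        Pr a (\bigcap_(i < n.+2) (Z i @^-1` A i)) =
        (\int[Pr a]_(w in \bigcap_(i < n.+1) (Z i @^-1` A i))
            T (Z n w) (A n.+1))%E].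

Definition Top (T : R.-pker S ~> S) (f : S -> R) : S -> R :=
  fun a => Rintegral (T a) setT f.

Definition Pop (eta : mstate k -> probability E R) (tauI : mstate k -> R)
  (f : S -> R) : S -> R :=
  fun a => Rintegral (eta a.1.2) setT (fun z => f (z, a.1.2, tauI a.1.2)).

Definition Qop eta tauI (f : S -> R) : S -> R :=
  fun a => f a - Pop eta tauI f a.

Definition Kop (T : R.-pker S ~> S) eta tauI (n : nat) (f : S -> R) : S -> R :=
  Pop eta tauI (Top T (iter n.-1 (fun g => Qop eta tauI (Top T g)) f)).

Definition chi (J : mstate k) : S -> R := fun a => (a.1.2 == J)%:R.

Definition Tmat (eta : mstate k -> probability E R) (tauI : mstate k -> R)
  (Pr : S -> probability Om R) (Z : nat -> Om -> S) (n : nat)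
  (I J : mstate k) : R :=
  Rintegral (eta I) setT
    (fun x => fine (Pr (x, I, tauI I) [set w | (Z n w).1.2 = J])).

Definition Kmat (T : R.-pker S ~> S) eta tauI (n : nat) (I J : mstate k)
  (x : E) (s : R) : R :=
  Kop T eta tauI n (chi J) (x, I, s).
End defs.

From HB Require Import structures.
From mathcomp Require Import all_boot all_order all_algebra.
From mathcomp Require Import all_classical all_reals all_analysis.
From mathcomp Require Import measurable_realfun.
Set Implicit Arguments. Unset Strict Implicit. Unset Printing Implicit Defensive.
Import Order.TTheory GRing.Theory Num.Theory.
Local Open Scope classical_set_scope.
Local Open Scope ring_scope.

(* Write A := Top T for the one-step transfer operator. By the Markov
   property, T_IJ(n tau) = (P A^n chi_J)(x, I, s). Splitting A = P A + Q A and
   iterating gives A^n f = sum_(i <= n) (Q A)^i P A^(n - i) f whenever P f = f,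
   as is the case for f = chi_J. Applying P A turns this into
   P A^(n+1) chi_J = sum_m K(m) (P A^(n+1-m) chi_J), and P A^j chi_J is the
   macrostate function sum_K T_KJ(j tau) chi_K, so linearity of K(m) gives the
   equation. *)

Section linear_on.
Variables (R : pzRingType) (V : lmodType R).

Definition lmod_closed (D : set V) :=
  [/\ D 0, forall f g, D f -> D g -> D (f + g) & forall a f, D f -> D (a *: f)].

Variable D : set V.

(* Integrals of non-integrable functions are junk values, so the operators of
   interest are only linear on a subspace, here the bounded measurable
   functions. *)
Definition linear_on (F : V -> V) :=
  [/\ forall f, D f -> D (F f),
      forall f g, D f -> D g -> F (f + g) = F f + F g &
      forall a f, D f -> F (a *: f) = a *: F f].

Hypothesis closedD : lmod_closed D.

Lemma lmod_closedB f g : D f -> D g -> D (f - g).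
Proof.
have [_ DD DZ] := closedD.
by move=> Df Dg; rewrite -scaleN1r; apply: DD => //; exact: DZ.
Qed.

Lemma lmod_closed_sum I (s : seq I) (h : I -> V) :
  (forall i, D (h i)) -> D (\sum_(i <- s) h i).
Proof. by have [D0 DD _] := closedD; move=> Dh; apply: big_ind. Qed.

Lemma linear_on_stable F f : linear_on F -> D f -> D (F f).
Proof. by case=> + _ _; exact. Qed.

Lemma linear_onZ F a f : linear_on F -> D f -> F (a *: f) = a *: F f.
Proof. by case=> _ _ + Df; exact. Qed.

Lemma linear_on0 F : linear_on F -> F 0 = 0.
Proof.
by have [D0 _ _] := closedD; case=> _ _ /(_ 0 0 D0); rewrite !scale0r.
Qed.

Lemma linear_on_sum F : linear_on F -> forall I (s : seq I) (h : I -> V),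
  (forall i, D (h i)) -> F (\sum_(i <- s) h i) = \sum_(i <- s) F (h i).
Proof.
move=> linF I s h Dh; case: (linF) => _ FD _.
elim: s => [|i s IH]; first by rewrite !big_nil linear_on0.
by rewrite !big_cons FD ?IH //; exact: lmod_closed_sum.
Qed.

Lemma linear_on_comp F G :
  linear_on F -> linear_on G -> linear_on (fun f => F (G f)).
Proof.
case=> DF FD FZ [DG GD GZ]; split=> [f Df|f g Df Dg|a f Df] /=.
- exact/DF/DG.
- by rewrite GD // FD //; exact: DG.
- by rewrite GZ // FZ //; exact: DG.
Qed.

Lemma linear_on_iter F n : linear_on F -> linear_on (iter n F).
Proof.
move=> linF; elim: n => [|n IH]; first by split.
exact: linear_on_comp.
Qed.

Lemma linear_onB F G :
  linear_on F -> linear_on G -> linear_on (fun f => F f - G f).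
Proof.
case=> DF FD FZ [DG GD GZ]; split=> [f Df|f g Df Dg|a f Df].
- by apply: lmod_closedB; [exact: DF | exact: DG].
- by rewrite FD // GD // opprD addrACA.
- by rewrite FZ // GZ // scalerBr.
Qed.

Section renewal.
Variables (A P : V -> V).
Hypotheses (linA : linear_on A) (linP : linear_on P).

Definition orthogonal_step (g : V) : V := A g - P (A g).

Definition memory_kernel (m : nat) (f : V) : V :=
  P (A (iter m.-1 orthogonal_step f)).

Lemma linear_on_orthogonal_step : linear_on orthogonal_step.
Proof. exact: (linear_onB linA (linear_on_comp linP linA)). Qed.

Lemma linear_on_memory_kernel m : linear_on (memory_kernel m).
Proof.
exact: linear_on_comp linP
  (linear_on_comp linA (linear_on_iter _ linear_on_orthogonal_step)).
Qed.

Lemma decomposition_term_stable i j f :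
  D f -> D (iter i orthogonal_step (P (iter j A f))).
Proof.
move=> Df; apply: (linear_on_stable (linear_on_iter _ linear_on_orthogonal_step)).
exact/(linear_on_stable linP)/(linear_on_stable (linear_on_iter _ linA)).
Qed.

Lemma iter_decomposition n f : D f -> P f = f ->
  iter n A f = \sum_(i < n.+1) iter i orthogonal_step (P (iter (n - i) A f)).
Proof.
move=> Df Pf; elim: n => [|n IH]; first by rewrite big_ord1 /= Pf.
have splitA g : A g = P (A g) + orthogonal_step g by rewrite addrC subrK.
rewrite big_ord_recl subn0 /= {1}splitA IH; congr (_ + _).
rewrite (linear_on_sum linear_on_orthogonal_step); last first.
  by move=> i; exact: decomposition_term_stable.
by apply: eq_bigr => i _; rewrite /bump /= add1n subSS.
Qed.

Lemma renewal_equation n f : D f -> P f = f ->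
  P (iter n.+1 A f) =
  \sum_(1 <= m < n.+2) memory_kernel m (P (iter (n.+1 - m) A f)).
Proof.
move=> Df Pf; rewrite iterS (iter_decomposition n Df Pf).
rewrite (linear_on_sum (linear_on_comp linP linA)); last first.
  by move=> i; exact: decomposition_term_stable.
by rewrite big_add1 /= big_mkord; apply: eq_bigr => i _; rewrite subSS.
Qed.

End renewal.

End linear_on.

Section bounded_measurable.
Context {R : realType} {d : measure_display} {X : measurableType d}.

Definition bounded_measurable (f : X -> R) :=
  measurable_fun setT f /\ exists M, forall x, `|f x| <= M.

Lemma lmod_closed_bounded_measurable :
  lmod_closed (bounded_measurable : set (X -> R)).
Proof.
split=> [|f g [mf [M fM]] [mg [N gN]]|a f [mf [M fM]]].
- by split; [exact: measurable_cst | exists 0 => x; rewrite normr0].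
- split; first exact: measurable_funD.
  by exists (M + N) => x; rewrite (le_trans (ler_normD _ _)) ?lerD.
- split; first exact: measurable_funM.
  by exists (`|a| * M) => x; rewrite normrM ler_wpM2l.
Qed.

Variable mu : {measure set X -> \bar R}.
Hypothesis mu1 : mu setT = 1%E.

Lemma bounded_measurable_integrable f :
  bounded_measurable f -> mu.-integrable setT (EFin \o f).
Proof.
move=> [mf [M fM]]; apply: measurable_bounded_integrable => //.
  by rewrite mu1 ltry.
exists M; split; first by rewrite num_real.
by move=> y /ltW My x _; apply: le_trans (fM x) My.
Qed.

Lemma normr_Rintegral_le f M : bounded_measurable f ->
  (forall x, `|f x| <= M) -> `|Rintegral mu setT f| <= M.
Proof.
move=> bf fM; have intf := bounded_measurable_integrable bf.
have intM : mu.-integrable setT (EFin \o fun=> M).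
  by apply: bounded_measurable_integrable; split => //; exists `|M| => _ /=.
apply: le_trans (le_normr_Rintegral measurableT intf) _.
apply: le_trans
  (le_Rintegral measurableT (integrable_norm intf) intM (fun x _ => fM x)) _.
by rewrite Rintegral_cst // mu1 mulr1.
Qed.

End bounded_measurable.

Section kernel_integral.
Context {R : realType} {dX dY : measure_display}
  {X : measurableType dX} {Y : measurableType dY}.
Variable T : R.-pker X ~> Y.

Lemma measurable_Rintegral_kernel f : bounded_measurable f ->
  measurable_fun setT (fun x => Rintegral (T x) setT f).
Proof.
move=> [mf _]; rewrite /Rintegral; under eq_fun do rewrite integralE.
apply: measurableT_comp; first exact: fine_measurable.
by apply: emeasurable_funB; apply: measurable_fun_integral_kernel => //;
  [exact: measurable_kernel | exact/measurable_funepos/measurable_EFinP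
  | exact: measurable_kernel | exact/measurable_funeneg/measurable_EFinP].
Qed.

Lemma bounded_measurable_Rintegral_kernel f : bounded_measurable f ->
  bounded_measurable (fun x => Rintegral (T x) setT f).
Proof.
move=> bf; split; first exact: measurable_Rintegral_kernel.
have [_ [M fM]] := bf; exists M => x.
by apply: normr_Rintegral_le bf fM; exact: prob_kernel.
Qed.

End kernel_integral.

Section augmented_operators.
Context {R : realType} {dE : measure_display} {E : measurableType dE} {k : nat}.
Local Notation S := (aug E k R).

Lemma measurable_macrostate : measurable_fun setT (fun b : S => b.1.2).
Proof. by apply: measurableT_comp => //; exact: measurableT_comp. Qed.

Lemma bounded_measurable_macro (c : mstate k -> R) :
  bounded_measurable (fun b : S => c b.1.2).
Proof.
have mc : measurable_fun setT c by move=> _ A _; rewrite setTI.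
split; first exact: measurableT_comp mc measurable_macrostate.
exists (\sum_(K : mstate k) `|c K|) => b.
by rewrite (bigD1 b.1.2) //= lerDl sumr_ge0.
Qed.

Lemma bounded_measurable_section (f : S -> R) I s :
  bounded_measurable f -> bounded_measurable (fun z : E => f (z, I, s)).
Proof.
case=> mf [M fM]; split; last by exists M.
apply: (measurableT_comp mf).
by apply: measurable_fun_pair => //; exact: measurable_fun_pair.
Qed.

Lemma linear_on_Top (T : R.-pker S ~> S) : linear_on bounded_measurable (Top T).
Proof.
have intT a f : bounded_measurable f -> (T a).-integrable setT (EFin \o f).
  by apply: bounded_measurable_integrable; exact: prob_kernel.
split=> [f bf|f g bf bg|c f bf]; first exact: bounded_measurable_Rintegral_kernel.
- by apply/funext => a; apply: RintegralD => //; exact: intT.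
- by apply/funext => a; apply: RintegralZl => //; exact: intT.
Qed.

Variables (eta : mstate k -> probability E R) (tauI : mstate k -> R).

Lemma linear_on_Pop : linear_on bounded_measurable (Pop eta tauI).
Proof.
have inteta J (f : S -> R) I s : bounded_measurable f ->
    (eta J).-integrable setT (EFin \o fun z => f (z, I, s)).
  move=> bf; apply: (bounded_measurable_integrable (mu := eta J)).
    exact: probability_setT.
  exact: bounded_measurable_section.
split=> [f bf|f g bf bg|c f bf].
- exact: (bounded_measurable_macro
    (fun I => Rintegral (eta I) setT (fun z => f (z, I, tauI I)))).
- by apply/funext => a; apply: RintegralD => //; exact: inteta.
- by apply/funext => a; apply: RintegralZl => //; exact: inteta.
Qed.

Lemma Pop_chi J : Pop eta tauI (chi J) = chi J.
Proof.
apply/funext => a; rewrite /Pop /chi /= Rintegral_cst //.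
by rewrite [L in fine L]probability_setT mulr1.
Qed.

Lemma macro_fun_sum_chi (c : mstate k -> R) :
  (fun b : S => c b.1.2) = \sum_(K : mstate k) c K *: chi K.
Proof.
apply/funext => b; rewrite fct_sumE (eq_bigr (fun K => c K * (b.1.2 == K)%:R)) //.
rewrite (bigD1 b.1.2) //= eqxx mulr1 big1 ?addr0 // => K /negbTE.
by rewrite eq_sym => ->; rewrite mulr0.
Qed.

End augmented_operators.

Section kernel_precomp.
Context {R : realType} {dX dY dZ : measure_display}
  {X : measurableType dX} {Y : measurableType dY} {Z : measurableType dZ}.
Variables (T : R.-pker Y ~> Z) (h : X -> Y).

Definition kernel_precomp (mh : measurable_fun setT h) :
  X -> {measure set Z -> \bar R} := fun x => T (h x).

Hypothesis mh : measurable_fun setT h.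

Let measurable_kernel_precomp U :
  measurable U -> measurable_fun setT (kernel_precomp mh ^~ U).
Proof. by move=> mU; exact: measurableT_comp (measurable_kernel T U mU) mh. Qed.

HB.instance Definition _ :=
  isKernel.Build _ _ _ _ _ (kernel_precomp mh) measurable_kernel_precomp.

Let kernel_precomp_prob x : kernel_precomp mh x setT = 1%E.
Proof. exact: prob_kernel. Qed.

HB.instance Definition _ :=
  Kernel_isProbability.Build _ _ _ _ _ (kernel_precomp mh) kernel_precomp_prob.

End kernel_precomp.

(* The mixture is the library's kernel composition of the constant kernel
   [Pa] with [(_, w) |-> T (W w)]. *)
Lemma ge0_integral_mixture {R : realType} {dO dY dZ : measure_display}
    {Om : measurableType dO} {Y : measurableType dY} {Z : measurableType dZ}
    (T : R.-pker Y ~> Z) (Pa : probability Om R) (W : Om -> Y)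
    (mu : {measure set Z -> \bar R}) :
  measurable_fun setT W ->
  (forall U, measurable U -> mu U = \int[Pa]_w T (W w) U)%E ->
  forall f, (forall z, 0 <= f z)%E -> measurable_fun setT f ->
  (\int[mu]_z f z = \int[Pa]_w \int[T (W w)]_z f z)%E.
Proof.
move=> mW muE f f0 mf.
have mWsnd : measurable_fun setT (W \o snd : Om * Om -> Y).
  exact: measurableT_comp mW measurable_snd.
pose l := @kprobability _ _ Om Om R (cst Pa) (measurable_cst _).
pose kW := kernel_precomp T mWsnd.
rewrite (eq_measure_integral (kcomp l kW point)) => [|U mU _].
  exact: integral_kcomp.
by rewrite muE.
Qed.

Section augmented_chain.
Context {R : realType} {dE dO : measure_display} {E : measurableType dE}
  {k : nat} {Om : measurableType dO}.
Local Notation S := (aug E k R).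
Variables (T : R.-pker S ~> S) (Pr : S -> probability Om R) (Z : nat -> Om -> S).
Hypothesis chain : augmented_markov_chain T Pr Z.

Lemma measurable_chain n : measurable_fun setT (Z n).
Proof. by case: chain. Qed.

Lemma chain_law_succ a n U : measurable U ->
  Pr a (Z n.+1 @^-1` U) = (\int[Pr a]_w T (Z n w) U)%E.
Proof.
move=> mU; have [_ _ markov] := chain.
pose A i := if i == n.+1 then U else setT.
have mA i : measurable (A i) by rewrite /A; case: ifP.
have := markov a n A mA; rewrite /A eqxx.
have -> : \bigcap_(i < n.+2) (Z i @^-1` A i) = Z n.+1 @^-1` U.
  apply/seteqP; split => [w /(_ n.+1 (ltnSn _))|w Uw i _]; rewrite /A ?eqxx //.
  by case: eqP => [->|].
have -> // : \bigcap_(i < n.+1) (Z i @^-1` A i) = setT.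
apply/seteqP; split => // w _ i /= ltin; rewrite /A.
by case: eqP ltin => [->|//]; rewrite ltnn.
Qed.

Lemma chain_integral_pushforward a n (g : S -> \bar R) :
  (forall b, 0 <= g b)%E -> measurable_fun setT g ->
  (\int[Pr a]_w g (Z n w) = \int[pushforward (Pr a) (Z n)]_b g b)%E.
Proof.
move=> g0 mg; rewrite ge0_integral_pushforward //; exact: measurable_chain.
Qed.

(* The measure structure of [pushforward] depends on the measurability of
   [Z n], which surfaces as extra goals below. *)
Lemma chain_integral_succ a n (g : S -> \bar R) :
  (forall b, 0 <= g b)%E -> measurable_fun setT g ->
  (\int[Pr a]_w g (Z n.+1 w) = \int[Pr a]_w \int[T (Z n w)]_b g b)%E.
Proof.
move=> g0 mg; rewrite chain_integral_pushforward //.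
apply: ge0_integral_mixture => //; try exact: measurable_chain.
by move=> ? U mU; exact: chain_law_succ.
Qed.

Lemma chain_integral_init a (g : S -> \bar R) :
  (forall b, 0 <= g b)%E -> measurable_fun setT g ->
  (\int[Pr a]_w g (Z 0 w))%E = g a.
Proof.
move=> g0 mg; rewrite chain_integral_pushforward //.
have [_ init _] := chain.
rewrite (eq_measure_integral \d_a) => [||? U mU _];
  [|exact: measurable_chain|exact: init].
by rewrite integral_dirac // diracT mul1e.
Qed.

Lemma EFin_Top g b : bounded_measurable g ->
  (Top T g b)%:E = (\int[T b]_x (g x)%:E)%E.
Proof.
move=> bg; rewrite /Top /Rintegral fineK // integrable_fin_num //.
by apply: bounded_measurable_integrable bg; exact: prob_kernel.
Qed.

Lemma Top_ge0 g : (forall b, 0 <= g b) -> forall b, 0 <= Top T g b.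
Proof. by move=> g0 b; apply: Rintegral_ge0. Qed.

Lemma chain_integral n g : bounded_measurable g -> (forall b, 0 <= g b) ->
  forall a, (\int[Pr a]_w (g (Z n w))%:E)%E = (iter n (Top T) g a)%:E.
Proof.
have mEFin (h : S -> R) : bounded_measurable h -> measurable_fun setT (EFin \o h).
  by case=> mh _; exact/measurable_EFinP.
elim: n g => [|n IH] g bg g0 a;
  have g0E b : (0 <= (EFin \o g) b)%E by rewrite lee_fin.
  exact: (@chain_integral_init a (EFin \o g) g0E (mEFin g bg)).
rewrite (@chain_integral_succ a n (EFin \o g) g0E (mEFin g bg)).
under eq_integral do rewrite -EFin_Top //.
rewrite IH ?iterSr //; last exact: Top_ge0.
exact: (linear_on_stable (linear_on_Top T)).
Qed.

Lemma prob_macrostate n a J :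
  fine (Pr a [set w | (Z n w).1.2 = J]) = iter n (Top T) (chi J) a.
Proof.
have mZJ : measurable (Z n @^-1` [set b : S | b.1.2 = J]).
  have mJ : measurable [set b : S | b.1.2 = J].
    rewrite (_ : [set b | _] = (fun b : S => b.1.2) @^-1` [set J]) //.
    by rewrite -[X in measurable X]setTI; exact: measurable_macrostate.
  by rewrite -[X in measurable X]setTI; apply: (measurable_chain n).
rewrite -[RHS]/(fine (iter n (Top T) (chi J) a)%:E) -chain_integral; last 2 first.
- exact: (bounded_measurable_macro (fun I => (I == J)%:R)).
- by move=> b; rewrite /chi ler0n.
congr fine; rewrite -[in LHS](setIT [set w | _]) -integral_indic //.
apply: eq_integral => w _; rewrite /chi indicE; congr (_%:R)%:E.
by case: eqP => [e|ne]; [rewrite mem_set | rewrite memNset].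
Qed.

End augmented_chain.

Section memory_kernel_equation.
Context {R : realType} {dE dO : measure_display} {E : measurableType dE}
  {k : nat} {Om : measurableType dO}.
Local Notation S := (aug E k R).
Variables (eta : mstate k -> probability E R) (tauI : mstate k -> R)
  (T : R.-pker S ~> S) (Pr : S -> probability Om R) (Z : nat -> Om -> S).
Hypothesis chain : augmented_markov_chain T Pr Z.

Lemma Pop_iter_chi n J :
  Pop eta tauI (iter n (Top T) (chi J)) =
  (fun b : S => Tmat eta tauI Pr Z n b.1.2 J).
Proof.
apply/funext => b; apply: eq_Rintegral => z _.
by rewrite (prob_macrostate chain).
Qed.

Lemma Tmat_renewal n I J x s :
  Tmat eta tauI Pr Z n.+1 I J =
  \sum_(1 <= m < n.+2) \sum_(K : mstate k)
     Kmat T eta tauI m I K x s * Tmat eta tauI Pr Z (n.+1 - m) K J.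
Proof.
have closedS := @lmod_closed_bounded_measurable R _ S.
have [_ _ bmZ] := closedS.
have bm_chi K : bounded_measurable (chi K : S -> R).
  exact: (bounded_measurable_macro (fun I => (I == K)%:R)).
have linA := linear_on_Top T; have linP := linear_on_Pop eta tauI.
have linK m := linear_on_memory_kernel closedS linA linP m.
rewrite -[LHS]/((fun b : S => Tmat eta tauI Pr Z n.+1 b.1.2 J) (x, I, s)).
rewrite -Pop_iter_chi (renewal_equation closedS linA linP n (bm_chi J));
  last exact: Pop_chi.
rewrite fct_sumE; apply: eq_bigr => m _.
rewrite Pop_iter_chi (macro_fun_sum_chi (fun K => Tmat eta tauI Pr Z _ K J)).
rewrite (linear_on_sum closedS (linK m)) => [|K]; last exact/bmZ/bm_chi.
rewrite fct_sumE; apply: eq_bigr => K _.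
by rewrite (linear_onZ _ (linK m) (bm_chi K)); exact: mulrC.
Qed.

End memory_kernel_equation.

Unset Implicit Arguments.

Theorem theorem2 (R : realType) (dE dO : measure_display)
  (E : measurableType dE) (k : nat) (macro : E -> mstate k)
  (Om : measurableType dO) (tau : R) (tauI : mstate k -> R)
  (eta : mstate k -> probability E R)
  (T : R.-pker aug E k R ~> aug E k R)
  (Pr : aug E k R -> probability Om R) (Z : nat -> Om -> aug E k R) :
  0 < tau ->
  (forall I, 0 < tauI I) ->
  (forall I, measurable (macro @^-1` [set I])) ->
  (forall I, eta I [set x | macro x <> I] = 0%E) ->
  augmented_markov_chain T Pr Z ->
  forall n : nat, (1 <= n)%N ->
  forall (I J : mstate k) (x : E) (s : R),
    Tmat eta tauI Pr Z n I J =
    \sum_(1 <= m < n.+1) \sum_(K : mstate k)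
       Kmat T eta tauI m I K x s * Tmat eta tauI Pr Z (n - m) K J.
Proof.
move=> _ _ _ _ chain [//|n] _ I J x s.
exact: Tmat_renewal.
Qed.
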